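(* Let $A$ be a deterministic parity tree automaton and $p$ a state of $A$. Then $p$ occurs in infinitely many pairwise incomparable (with respect to the prefix order) nodes of some accepting run of $A$ if and only if $p$ is productive and $p$ is replicated by an accepting loop.
   Context: Deterministic parity tree automata: total $\delta:Q\times\Sigma\to Q\times Q$, edges $q\xrightarrow{\sigma,d}q'$ with direction $d\in\{0,1\}$. A run is accepting if on every path the highest rank occurring infinitely often is even. A state is productive if it occurs in some accepting run. A loop is a path from a state back to itself; it is accepting iff the maximal rank on it is even. A state $p$ is replicated by a loop $q_1\xrightarrow{\sigma,d_0}q_2\to\cdots\to q_1$ if there exists a path $q_1\xrightarrow{\sigma,d_1}q_2'\to\cdots\to p$ with $d_1\ne d_0$ (same first letter, other direction). We assume (as a standing convention) that all states reachable in the automaton are productive except possibly one all-rejecting state $\bot$, and every transition is either used in an accepting run or has the form $q\xrightarrow{\sigma}\bot,\bot$. *)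

From mathcomp Require Import all_boot.
Set Implicit Arguments. Unset Strict Implicit. Unset Printing Implicit Defensive.

(* Direction 0 is [false] (left child), direction 1 is [true] (right child). *)
Record dpta (Q S : finType) := DPTA {
  init  : Q;
  delta : Q -> S -> Q * Q;
  rank  : Q -> nat }.

Section DPTA.
Variables (Q S : finType) (A : dpta Q S).

Definition node := seq bool.

Definition run_from (q : Q) (t : node -> S) (r : node -> Q) : Prop :=
  r [::] = q /\
  forall w : node, delta A (r w) (t w) = (r (rcons w false), r (rcons w true)).

Definition path_node (pi : nat -> bool) (n : nat) : node := [seq pi i | i <- iota 0 n].

Definition path_accepting (r : node -> Q) (pi : nat -> bool) : Prop :=
  exists m : nat, ~~ odd m /\
    (forall N, exists n, N <= n /\ rank A (r (path_node pi n)) = m) /\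
    (exists N, forall n, N <= n -> rank A (r (path_node pi n)) <= m).

Definition run_accepting (r : node -> Q) : Prop :=
  forall pi : nat -> bool, path_accepting r pi.

Definition accepting_run (t : node -> S) (r : node -> Q) : Prop :=
  run_from (init A) t r /\ run_accepting r.

Definition productive (p : Q) : Prop :=
  exists (t : node -> S) (r : node -> Q) (w : node), accepting_run t r /\ r w = p.

Definition transition_used (q : Q) (sigma : S) : Prop :=
  exists (t : node -> S) (r : node -> Q) (w : node),
    accepting_run t r /\ r w = q /\ t w = sigma.

Definition step (q : Q) (e : S * bool) : Q :=
  if e.2 then (delta A q e.1).2 else (delta A q e.1).1.

Definition path_end (q : Q) (s : seq (S * bool)) : Q := foldl step q s.

Definition is_loop (q : Q) (s : seq (S * bool)) : Prop :=
  s != [::] /\ path_end q s = q.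

Definition loop_accepting (q : Q) (s : seq (S * bool)) : Prop :=
  ~~ odd (\max_(x <- scanl step q s) rank A x).

Definition replicated_by (p q : Q) (sigma : S) (d0 : bool) (s : seq (S * bool)) : Prop :=
  exists s' : seq (S * bool), path_end q ((sigma, ~~ d0) :: s') = p.

Definition replicated_by_accepting_loop (p : Q) : Prop :=
  exists (q : Q) (sigma : S) (d0 : bool) (s : seq (S * bool)),
    is_loop q ((sigma, d0) :: s) /\ loop_accepting q ((sigma, d0) :: s) /\
    replicated_by p q sigma d0 s.

Definition standing_convention : Prop :=
  exists bot : Q,
    (forall q : Q, q <> bot -> productive q) /\
    (forall (q : Q) (sigma : S), transition_used q sigma \/ delta A q sigma = (bot, bot)).

Definition occurs_inf_incomparable (r : node -> Q) (p : Q) : Prop :=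
  exists f : nat -> node,
    (forall i, r (f i) = p) /\
    (forall i j, i <> j -> ~~ prefix (f i) (f j)).

End DPTA.

From mathcomp Require Import all_boot.
From Stdlib Require Import ClassicalEpsilon.

(* If an accepting run has infinitely many pairwise incomparable p-nodes, a
   Koenig-type argument gives a branch from which infinitely many of them branch
   off; some state q recurs at infinitely many branch-off points, and two of them
   enclosing an occurrence of the highest rank seen infinitely often on the
   (accepting) branch delimit an accepting loop on q, whose other successor at its
   first step leads to p.  Conversely, unfold such a loop along an infinite spine,
   hang below each passage through q a tree leading to p, and complete every other
   off-spine node by an accepting subtree, which exists by the standing convention;
   the spine repeats the ranks of the loop, so the whole run is accepting. *)

Set Implicit Arguments.
Unset Strict Implicit.
Unset Printing Implicit Defensive.

(* [path_accepting A r pi] is by definition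
   [parity_accepting (fun n => rank A (r (path_node pi n)))]. *)
Definition parity_accepting (g : nat -> nat) : Prop :=
  exists m : nat, ~~ odd m /\
    (forall N, exists n, N <= n /\ g n = m) /\
    (exists N, forall n, N <= n -> g n <= m).

Lemma parity_accepting_ext g h : g =1 h -> parity_accepting g -> parity_accepting h.
Proof.
move=> gh [m [even_m [m_inf [N m_max]]]]; exists m; split=> //; split.
- by move=> M; have [n [Mn <-]] := m_inf M; exists n; rewrite gh.
- by exists N => n /m_max; rewrite gh.
Qed.

Lemma parity_accepting_shift k g :
  parity_accepting g <-> parity_accepting (fun n => g (k + n)).
Proof.
split=> [[m [even_m [m_inf [N m_max]]]]|[m [even_m [m_inf [N m_max]]]]];
  exists m; split=> //; split.
- move=> M; have [n [kMn gn]] := m_inf (k + M).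
  have kn : k <= n := leq_trans (leq_addr _ _) kMn.
  by exists (n - k); rewrite leq_subRL // subnKC.
- by exists N => n Nn; apply: m_max; rewrite (leq_trans Nn) ?leq_addl.
- move=> M; have [n [Mn gn]] := m_inf M.
  by exists (k + n); rewrite (leq_trans Mn) ?leq_addl.
- exists (k + N) => n kNn; have kn : k <= n := leq_trans (leq_addr _ _) kNn.
  by rewrite -(subnKC kn) m_max // leq_subRL.
Qed.

Lemma parity_accepting_periodic g l : 0 < l -> (forall n, g (n + l) = g n) ->
  ~~ odd (\max_(i < l) g i) -> parity_accepting g.
Proof.
move=> l_gt0 g_per even_max.
have g_mod n : g n = g (n %% l).
  rewrite {1}(divn_eq n l) addnC; elim: (n %/ l) => [|k IH]; first by rewrite addn0.
  by rewrite mulSn addnCA addnC g_per.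
have card_gt0 : 0 < #|'I_l| by rewrite card_ord.
have [i max_i] := eq_bigmax (fun i : 'I_l => g i) card_gt0.
exists (g i); split; first by rewrite -max_i.
split=> [N|].
- exists (i + N * l); rewrite (leq_trans (leq_pmulr N l_gt0)) ?leq_addl //.
  by rewrite g_mod addnC modnMDl modn_small.
- exists 0 => n _; rewrite g_mod -max_i.
  exact: (leq_bigmax (Ordinal (ltn_pmod n l_gt0))).
Qed.

Lemma negb_neq (b : bool) : ~~ b != b.
Proof. by case: b. Qed.

Lemma ltn_addS m n : m < n -> exists k, n = m + k.+1.
Proof. by move=> mn; exists (n - m).-1; rewrite prednK ?subn_gt0 // subnKC // ltnW. Qed.

Lemma path_node_split (pi : nat -> bool) a k :
  path_node pi (a + k) = path_node pi a ++ path_node (fun j => pi (a + j)) k.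
Proof.
rewrite /path_node iotaD map_cat add0n; congr (_ ++ _).
by rewrite -[a in iota a _]addn0 iotaDl -map_comp.
Qed.

Lemma path_node_S (pi : nat -> bool) k :
  path_node pi k.+1 = pi 0 :: path_node (fun j => pi j.+1) k.
Proof. by rewrite -add1n path_node_split. Qed.

Lemma path_node_rcons (pi : nat -> bool) k :
  path_node pi k.+1 = rcons (path_node pi k) (pi k).
Proof. by rewrite -addn1 path_node_split cats1 addn0. Qed.

Lemma size_path_node (pi : nat -> bool) k : size (path_node pi k) = k.
Proof. by rewrite size_map size_iota. Qed.

Lemma eq_path_node (pi pi' : nat -> bool) n :
  (forall k, k < n -> pi k = pi' k) -> path_node pi n = path_node pi' n.
Proof. by move=> eq_pi; apply/eq_in_map => k; rewrite mem_iota => /andP[_ /eq_pi]. Qed.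

Lemma prefix_rcons_proper (T : eqType) (u v : seq T) :
  prefix u v -> u <> v -> exists x, prefix (rcons u x) v.
Proof.
move=> /prefixP[[|x w] ->]; first by rewrite cats0.
by move=> _; exists x; rewrite -cat_rcons prefix_prefix.
Qed.

Lemma prefix_diverge (T : eqType) (w u v : seq T) x y :
  x != y -> ~~ prefix (w ++ x :: u) (w ++ y :: v).
Proof. by move=> xy; rewrite prefix_catr // eqxx prefix_cons (negPf xy). Qed.

Lemma prefix_periodic_branch_offs (dir : nat -> bool) l i j u v :
  0 < l -> (forall k, dir (k * l) = dir 0) -> i <> j ->
  ~~ prefix (path_node dir (i * l) ++ ~~ dir 0 :: u) (path_node dir (j * l) ++ ~~ dir 0 :: v).
Proof.
move=> l_gt0 dir_per ij.
have extend i' j' : i' < j' ->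
    exists w, path_node dir (j' * l) = path_node dir (i' * l) ++ dir 0 :: w.
  move=> lt; have [m ->] : exists m, j' * l = i' * l + m.+1 by apply: ltn_addS; rewrite ltn_pmul2r.
  by rewrite path_node_split path_node_S addn0 dir_per; eexists.
case: (ltngtP i j) => [/extend [w ->]|/extend [w ->]|/ij []]; rewrite -catA /=.
- by apply: prefix_diverge; rewrite negb_neq.
- by apply: prefix_diverge; rewrite eq_sym negb_neq.
Qed.

Lemma infinitely_often_const (T : finType) (P : nat -> Prop) (g : nat -> T) :
  (forall N, exists n, N <= n /\ P n) ->
  exists x, forall N, exists n, N <= n /\ P n /\ g n = x.
Proof.
move=> P_inf; apply: NNPP => none.
have [bound bound_ok] : exists bound : T -> nat,
    forall x n, bound x <= n -> ~ (P n /\ g n = x).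
  apply: (choice (fun x b => forall n, b <= n -> ~ (P n /\ g n = x))) => x.
  apply: NNPP => unbounded; apply: none; exists x => N.
  apply: NNPP => beyond; apply: unbounded; exists N => n Nn Pgn.
  by apply: beyond; exists n.
have [n [le_n Pn]] := P_inf (\max_x bound x).
by apply: (bound_ok (g n) n); rewrite ?(leq_trans (leq_bigmax (g n))).
Qed.

Section IncomparableNodes.
Variable f : nat -> node.
Hypothesis f_incomparable : forall i j, i <> j -> ~~ prefix (f i) (f j).

Definition infinitely_below (u : node) : Prop :=
  forall M, exists i, M <= i /\ prefix u (f i).

Lemma infinitely_below_proper u i : infinitely_below u -> u <> f i.
Proof.
move=> inf_u u_fi; have [j [ij]] := inf_u i.+1; rewrite u_fi.
by apply/negP/f_incomparable => i_j; rewrite i_j ltnn in ij.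
Qed.

Lemma not_infinitely_below u :
  ~ infinitely_below u -> exists M, forall i, M <= i -> ~ prefix u (f i).
Proof.
move=> fin_u; apply: NNPP => unbounded; apply: fin_u => M.
apply: NNPP => none; apply: unbounded; exists M => i Mi pre.
by apply: none; exists i.
Qed.

Lemma infinitely_below_child u :
  infinitely_below u -> exists b, infinitely_below (rcons u b).
Proof.
move=> inf_u; apply: NNPP => no_child.
have [M0 M0_ok] := not_infinitely_below (fun h => no_child (ex_intro _ false h)).
have [M1 M1_ok] := not_infinitely_below (fun h => no_child (ex_intro _ true h)).
have [i [Mi pre]] := inf_u (maxn M0 M1).
have [[] pre_b] := prefix_rcons_proper pre (infinitely_below_proper (i := i) inf_u).
- by apply: (M1_ok i) pre_b; exact: leq_trans (leq_maxr _ _) Mi.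
- by apply: (M0_ok i) pre_b; exact: leq_trans (leq_maxl _ _) Mi.
Qed.

Lemma infinitely_below_path :
  exists pi : nat -> bool, forall n, infinitely_below (path_node pi n).
Proof.
have [next next_ok] : exists next : node -> bool,
    forall u, infinitely_below u -> infinitely_below (rcons u (next u)).
  apply: (choice (fun u b => infinitely_below u -> infinitely_below (rcons u b))) => u.
  case: (classic (infinitely_below u)) => [inf_u|fin_u].
    by have [b ?] := infinitely_below_child inf_u; exists b.
  by exists true => /fin_u.
pose un n := iter n (fun u => rcons u (next u)) [::].
exists (fun n => next (un n)) => n.
have -> : path_node (fun n => next (un n)) n = un n.
  by elim: n => [|n IH] //; rewrite path_node_rcons IH.
elim: n => [|n IH]; last exact: next_ok.
by move=> M; exists M; rewrite prefix0s.
Qed.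

(* Along a path through infinitely many [f i], infinitely many [f i] must leave
   it, because each [f i] has finite depth. *)
Lemma incomparable_branch_offs : exists pi : nat -> bool,
  forall N, exists n, N <= n /\ exists i, prefix (rcons (path_node pi n) (~~ pi n)) (f i).
Proof.
have [pi on_pi] := infinitely_below_path; exists pi => N; apply: NNPP => none.
have [i [_ pre]] := on_pi N 0.
suff below k : prefix (path_node pi (N + k)) (f i).
  have := size_prefix (below (size (f i)).+1).
  by rewrite size_path_node addnS ltnNge leq_addl.
elim: k => [|k IH]; first by rewrite addn0.
have [b pre_b] := prefix_rcons_proper IH (infinitely_below_proper (i := i) (on_pi _)).
rewrite addnS path_node_rcons; case: (eqVneq b (pi (N + k))) => [<- //|b_neq].
case: none; exists (N + k); split; first exact: leq_addr.
by exists i; move: b_neq pre_b; case: b; case: (pi (N + k)).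
Qed.

End IncomparableNodes.

Definition join_tree (S : Type) (a : S) (tl tr : node -> S) : node -> S :=
  fun v => if v is b :: w then (if b then tr else tl) w else a.

Section Automaton.
Variables (Q S : finType) (A : dpta Q S).

Lemma path_end_cons x e s : path_end A x (e :: s) = path_end A (step A x e) s.
Proof. by []. Qed.

Fixpoint run_of (x : Q) (t : node -> S) (v : node) : Q :=
  if v is d :: w then run_of (step A x (t [::], d)) (fun u => t (d :: u)) w else x.

Definition accepting_from (x : Q) (t : node -> S) : Prop := run_accepting A (run_of x t).

Lemma run_of_cat x t w1 w2 :
  run_of x t (w1 ++ w2) = run_of (run_of x t w1) (fun u => t (w1 ++ u)) w2.
Proof. by elim: w1 x t => [|d w1 IH] x t //=; rewrite IH. Qed.

Lemma run_of_rcons x t w d : run_of x t (rcons w d) = step A (run_of x t w) (t w, d).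
Proof. by rewrite -cats1 run_of_cat /= cats0. Qed.

Lemma run_from_run_of x t : run_from A x t (run_of x t).
Proof. by split=> // w; rewrite !run_of_rcons /step /=; case: (delta A _ _). Qed.

Section RunFrom.
Variables (x : Q) (t : node -> S) (r : node -> Q).
Hypothesis run : run_from A x t r.

Lemma run_from_step w d : step A (r w) (t w, d) = r (rcons w d).
Proof. by case: run => _ r_delta; rewrite /step /= r_delta; case: d. Qed.

Lemma run_of_run_from : r =1 run_of x t.
Proof.
move=> v; elim/last_ind: v => [|w d IH]; first by case: run.
by rewrite run_of_rcons -IH run_from_step.
Qed.

Lemma run_path_end v w : exists s, path_end A (r v) s = r (v ++ w).
Proof.
elim: w v => [|d w IH] v; first by exists [::]; rewrite cats0.
have [s s_end] := IH (rcons v d).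
by exists ((t v, d) :: s); rewrite path_end_cons run_from_step s_end cat_rcons.
Qed.

Lemma path_end_along_path pi a len :
  path_end A (r (path_node pi a)) [seq (t (path_node pi j), pi j) | j <- iota a len]
  = r (path_node pi (a + len)).
Proof.
elim: len a => [|len IH] a; first by rewrite addn0.
by rewrite path_end_cons run_from_step -path_node_rcons IH addnS.
Qed.

Lemma scanl_along_path pi a len :
  scanl (step A) (r (path_node pi a)) [seq (t (path_node pi j), pi j) | j <- iota a len]
  = [seq r (path_node pi j) | j <- iota a.+1 len].
Proof.
elim: len a => [|len IH] a //=.
by rewrite run_from_step -path_node_rcons IH.
Qed.

(* Between two visits of [q] enclosing a visit of the maximal rank recurring on an
   accepting path, the path traces an accepting loop. *)
Lemma loop_on_accepting_path pi (P : nat -> Prop) q : path_accepting A r pi ->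
  (forall N, exists n, N <= n /\ P n /\ r (path_node pi n) = q) ->
  exists n s, P n /\ r (path_node pi n) = q /\
    is_loop A q ((t (path_node pi n), pi n) :: s) /\
    loop_accepting A q ((t (path_node pi n), pi n) :: s).
Proof.
move=> [m [even_m [m_inf [N0 m_max]]]] q_inf.
have [n1 [N0n1 [Pn1 q_n1]]] := q_inf N0.
have [k [n1k rank_k]] := m_inf n1.+1.
have [n2 [kn2 [_ q_n2]]] := q_inf k.
have [d n2E] := ltn_addS (leq_trans n1k kn2).
exists n1, [seq (t (path_node pi j), pi j) | j <- iota n1.+1 d]; do 2!split=> //.
rewrite -[_ :: _]/[seq (t (path_node pi j), pi j) | j <- iota n1 d.+1] -q_n1.
split; first by split=> //; rewrite path_end_along_path -n2E q_n1 q_n2.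
rewrite /loop_accepting scanl_along_path big_map.
suff -> : \max_(j <- iota n1.+1 d.+1) rank A (r (path_node pi j)) = m by [].
apply/eqP; rewrite eqn_leq; apply/andP; split.
- apply/bigmax_leqP_seq => j; rewrite mem_iota => /andP[n1j _] _.
  by apply: m_max; rewrite (leq_trans N0n1) // ltnW.
- by rewrite -rank_k (leq_bigmax_seq k) // mem_iota n1k addSn -n2E ltnS.
Qed.

End RunFrom.

Lemma run_accepting_suffix (r : node -> Q) w :
  run_accepting A r -> run_accepting A (fun u => r (w ++ u)).
Proof.
move=> acc pi'.
pose pi j := if j < size w then nth false w j else pi' (j - size w).
have piE k : path_node pi (size w + k) = w ++ path_node pi' k.
  rewrite path_node_split; congr (_ ++ _).
    rewrite -[RHS](mkseq_nth false); apply/eq_in_map => j.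
    by rewrite mem_iota add0n /pi => /andP[_ ->].
  by apply: eq_path_node => j _; rewrite /pi ltnNge leq_addr addKn.
move/(parity_accepting_shift (size w)): (acc pi).
by apply: parity_accepting_ext => k; rewrite piE.
Qed.

Lemma productive_accepting_from z : productive A z -> exists t, accepting_from z t.
Proof.
move=> [t [r [w [[run acc] r_w]]]]; exists (fun u => t (w ++ u)).
move=> pi; apply: parity_accepting_ext (run_accepting_suffix w acc pi) => u /=.
by rewrite !(run_of_run_from run) run_of_cat -(run_of_run_from run) r_w.
Qed.

Lemma accepting_from_join x a tl tr :
  accepting_from (step A x (a, false)) tl -> accepting_from (step A x (a, true)) tr ->
  accepting_from x (join_tree a tl tr).
Proof.
move=> acc_l acc_r pi; apply/(parity_accepting_shift 1).
have acc_child : path_accepting A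
    (run_of (step A x (a, pi 0)) (if pi 0 then tr else tl)) (fun j => pi j.+1).
  by case: (pi 0); [apply: acc_r | apply: acc_l].
apply: parity_accepting_ext acc_child => n.
by rewrite add1n path_node_S; case: (pi 0).
Qed.

Lemma replicated_of_incomparable_occurrences t r p :
  accepting_run A t r -> occurs_inf_incomparable r p -> replicated_by_accepting_loop A p.
Proof.
move=> [run acc] [f [f_p f_inc]].
have [pi branch] := incomparable_branch_offs f_inc.
have [q q_inf] := infinitely_often_const (fun n => r (path_node pi n)) branch.
have [n [s [[i pre] [q_n [loop acc_loop]]]]] := loop_on_accepting_path run (acc pi) q_inf.
exists q, (t (path_node pi n)), (pi n), s; do 2!split=> //.
have [w fiE] := prefixP pre.
have [s' s'_end] := run_path_end run (rcons (path_node pi n) (~~ pi n)) w.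
by exists s'; rewrite path_end_cons -q_n (run_from_step run) s'_end -fiE f_p.
Qed.

Section Comb.
Variables (sig : nat -> S) (dir : nat -> bool) (plug : nat -> node -> S) (st : nat -> Q).
Hypothesis st_step : forall i, step A (st i) (sig i, dir i) = st i.+1.

Fixpoint comb (i : nat) (v : node) : S :=
  if v is b :: w then (if b == dir i then comb i.+1 w else plug i w) else sig i.

Lemma run_of_comb_cons i b w :
  run_of (st i) (comb i) (b :: w) =
  if b == dir i then run_of (st i.+1) (comb i.+1) w
  else run_of (step A (st i) (sig i, ~~ dir i)) (plug i) w.
Proof. by rewrite /=; case: eqVneq => [->|]; [rewrite st_step | case: b; case: (dir i)]. Qed.

Lemma run_of_comb_spine i n u :
  run_of (st i) (comb i) (path_node (fun k => dir (i + k)) n ++ u) =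
  run_of (st (i + n)) (comb (i + n)) u.
Proof.
elim: n i => [|n IH] i; first by rewrite addn0.
rewrite path_node_S cat_cons run_of_comb_cons addn0 eqxx -addSnnS -IH.
by rewrite (@eq_path_node _ (fun k => dir (i.+1 + k))) // => k _; rewrite addSnnS.
Qed.

Lemma accepting_comb :
  (forall i, accepting_from (step A (st i) (sig i, ~~ dir i)) (plug i)) ->
  parity_accepting (fun n => rank A (st n)) -> accepting_from (st 0) (comb 0).
Proof.
move=> acc_plug acc_spine pi.
case: (classic (exists n, pi n != dir n)) => [leaves|stays].
- case: (ex_minnP leaves) => n0 n0_leaves n0_min.
  have pi_n0 : path_node pi n0 = path_node (fun k => dir (0 + k)) n0.
    apply: eq_path_node => k k_lt; apply/eqP; apply: contraTT k_lt => k_leaves.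
    by rewrite -leqNgt n0_min.
  apply/(parity_accepting_shift n0.+1).
  apply: parity_accepting_ext (acc_plug n0 (fun k => pi (n0.+1 + k))) => k.
  rewrite path_node_split path_node_rcons cat_rcons pi_n0 run_of_comb_spine add0n.
  by rewrite run_of_comb_cons (negPf n0_leaves).
- apply: parity_accepting_ext acc_spine => n.
  have -> : path_node pi n = path_node (fun k => dir (0 + k)) n ++ [::].
    rewrite cats0; apply: eq_path_node => k _; apply/eqP/negPn/negP => k_leaves.
    by apply: stays; exists k.
  by rewrite run_of_comb_spine add0n.
Qed.

End Comb.

Section LoopUnfolding.
Variables (q : Q) (e : S * bool) (s : seq (S * bool)).
Hypothesis loop_q : path_end A q (e :: s) = q.

Definition loop_label i := nth e (e :: s) (i %% size (e :: s)).
Definition loop_state i := path_end A q (take (i %% size (e :: s)) (e :: s)).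

Lemma loop_state_step i : step A (loop_state i) (loop_label i) = loop_state i.+1.
Proof.
have i_lt : i %% size (e :: s) < size (e :: s) by rewrite ltn_pmod.
rewrite /loop_state /loop_label /path_end -foldl_rcons -take_nth //.
rewrite -[i.+1]addn1 -modnDml addn1.
case: (ltngtP (i %% size (e :: s)).+1 (size (e :: s))) => [lt|gt|->].
- by rewrite (modn_small lt).
- by move: gt; rewrite ltnS leqNgt i_lt.
- by rewrite modnn take_size take0.
Qed.

Lemma loop_state_take i :
  i <= size (e :: s) -> loop_state i = path_end A q (take i (e :: s)).
Proof.
rewrite leq_eqVlt => /predU1P[->|i_lt]; last by rewrite /loop_state modn_small.
by rewrite /loop_state modnn take0 take_size loop_q.
Qed.

Lemma scanl_loop :
  scanl (step A) q (e :: s) = [seq loop_state i.+1 | i <- iota 0 (size (e :: s))].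
Proof.
apply: (@eq_from_nth _ q) => [|i]; first by rewrite size_scanl size_map size_iota.
rewrite size_scanl => i_lt.
by rewrite nth_scanl // (nth_map 0) ?size_iota // nth_iota // add0n loop_state_take.
Qed.

Lemma parity_accepting_loop :
  loop_accepting A q (e :: s) -> parity_accepting (fun n => rank A (loop_state n)).
Proof.
move=> acc_loop; apply/(parity_accepting_shift 1).
apply: (parity_accepting_periodic (l := size (e :: s))) => // [n|].
  by rewrite /loop_state addnA modnDr.
move: acc_loop; rewrite /loop_accepting scanl_loop big_map.
by rewrite -(big_mkord xpredT (fun i => rank A (loop_state (1 + i)))) /index_iota subn0.
Qed.

End LoopUnfolding.

Section Convention.
Hypothesis convention : standing_convention A.

Lemma productive_path_start x s : productive A (path_end A x s) -> productive A x.
Proof.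
have [bot [prod_bot used_or_bot]] := convention.
elim: s x => [|[a d] s IH] x //; rewrite path_end_cons => /IH prod_y.
case: (eqVneq x bot) => [x_bot|/eqP]; last exact: prod_bot.
case: (used_or_bot x a) => [[t [r [w [acc [r_w _]]]]]|bot_bot]; first by exists t, r, w.
by rewrite x_bot; move: prod_y; rewrite /step bot_bot; case: d.
Qed.

Lemma productive_sibling x a d b :
  productive A (step A x (a, d)) -> productive A (step A x (a, b)).
Proof.
move=> prod; have [bot [_ used_or_bot]] := convention.
case: (used_or_bot x a) => [[t [r [w [[run acc] [r_w t_w]]]]]|bot_bot].
- by exists t, r, (rcons w b); rewrite -(run_from_step run) r_w t_w.
- by move: prod; rewrite /step bot_bot; case: d; case: b.
Qed.

Lemma productive_loop_state q e s i : path_end A q (e :: s) = q -> productive A q ->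
  productive A (loop_state q e s i).
Proof.
move=> loop prod_q; apply: (productive_path_start (s := drop (i %% size (e :: s)) (e :: s))).
by rewrite /loop_state /path_end -foldl_cat cat_take_drop -/(path_end A q _) loop.
Qed.

(* Siblings of a productive path are productive, so they can be completed by
   accepting subtrees. *)
Lemma graft_along_path x s t2 :
  productive A (path_end A x s) -> accepting_from (path_end A x s) t2 ->
  exists t, accepting_from x t /\
    forall u, run_of x t (map snd s ++ u) = run_of (path_end A x s) t2 u.
Proof.
elim: s x => [|[a d] s IH] x; first by move=> _ acc; exists t2.
rewrite path_end_cons => prod acc.
have [ty [acc_y ty_E]] := IH _ prod acc.
have [tz acc_z] := productive_accepting_from
  (productive_sibling (~~ d) (productive_path_start prod)).
exists (join_tree a (if d then tz else ty) (if d then ty else tz)); split.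
- by apply: accepting_from_join; case: d acc_y acc_z {ty_E prod acc}.
- by move=> u; case: d ty_E {acc_y acc_z prod acc} => /= ty_E; apply: ty_E.
Qed.

Lemma accepting_loop_comb q a d s TR :
  path_end A q ((a, d) :: s) = q -> loop_accepting A q ((a, d) :: s) -> productive A q ->
  accepting_from (step A q (a, ~~ d)) TR ->
  exists (T : node -> S) (c : nat -> node), accepting_from q T /\
    (forall k u, run_of q T (c k ++ u) = run_of (step A q (a, ~~ d)) TR u) /\
    (forall i j u v, i <> j -> ~~ prefix (c i ++ u) (c j ++ v)).
Proof.
move=> loop acc_loop prod_q acc_TR.
pose l := size ((a, d) :: s).
pose sig i := (loop_label (a, d) s i).1.
pose dir i := (loop_label (a, d) s i).2.
pose st := loop_state q (a, d) s.
have [G G_acc] : exists G : Q -> node -> S, forall y, productive A y -> accepting_from y (G y).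
  apply: (choice (fun y t => productive A y -> accepting_from y t)) => y.
  case: (classic (productive A y)) => [/productive_accepting_from [t acc]|unprod].
    by exists t.
  by exists TR => /unprod.
pose plug i := if i %% l == 0 then TR else G (step A (st i) (sig i, ~~ dir i)).
have st_step i : step A (st i) (sig i, dir i) = st i.+1.
  by rewrite /st -(loop_state_step loop) /sig /dir; case: loop_label.
have st0 : st 0 = q by rewrite /st /loop_state mod0n.
have dir0 : dir 0 = d by rewrite /dir /loop_label mod0n.
have at_period k : [/\ st (k * l) = q, sig (k * l) = a, dir (k * l) = d & plug (k * l) = TR].
  by rewrite /st /sig /dir /plug /loop_state /loop_label modnMl.
pose c k := path_node dir (k * l) ++ [:: ~~ d].
exists (comb sig dir plug 0), c; split; [|split].
- rewrite -st0; apply: (accepting_comb st_step) => [i|]; last exact: parity_accepting_loop.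
  rewrite /plug; case: eqP => [i_mod|_].
    by rewrite /st /sig /dir /loop_state /loop_label i_mod.
  apply: G_acc; apply: (productive_sibling (d := dir i)).
  by rewrite st_step; apply: productive_loop_state.
- move=> k u; have [st_k sig_k dir_k plug_k] := at_period k.
  rewrite -{1}st0 /c -catA (@run_of_comb_spine sig dir plug st st_step 0 (k * l)) add0n cat1s.
  rewrite (@run_of_comb_cons sig dir plug st st_step) dir_k (negPf (negb_neq d)).
  by rewrite plug_k st_k sig_k.
- move=> i j u v ij; rewrite /c -!catA /= -dir0.
  apply: prefix_periodic_branch_offs => // k.
  by have [_ _ -> _] := at_period k.
Qed.

Lemma accepting_run_of_replication p :
  productive A p -> replicated_by_accepting_loop A p ->
  exists t r, accepting_run A t r /\ occurs_inf_incomparable r p.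
Proof.
move=> prod_p [q [a [d [s [[_ loop] [acc_loop [s' rep]]]]]]].
rewrite path_end_cons in rep.
have prod_q : productive A q.
  by apply: (productive_path_start (s := (a, ~~ d) :: s')); rewrite path_end_cons rep.
have [tp acc_p] := productive_accepting_from prod_p.
have := graft_along_path (x := step A q (a, ~~ d)) (s := s') (t2 := tp); rewrite rep.
move=> /(_ prod_p acc_p) [TR [acc_TR TR_E]].
have [T [c [acc_T [T_E c_inc]]]] := accepting_loop_comb loop acc_loop prod_q acc_TR.
have [t1 [r1 [w1 [[run1 _] r1_w1]]]] := prod_q.
have [s1 s1_E] := run_path_end run1 [::] w1.
rewrite (proj1 run1) r1_w1 in s1_E.
have := graft_along_path (x := init A) (s := s1) (t2 := T); rewrite s1_E.
move=> /(_ prod_q acc_T) [T0 [acc_T0 T0_E]].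
exists T0, (run_of (init A) T0); split; first by split; [exact: run_from_run_of|].
exists (fun k => map snd s1 ++ (c k ++ map snd s')); split=> [k|i j u_ij].
- by rewrite T0_E T_E -[map snd s']cats0 TR_E.
- by rewrite prefix_catr // eqxx c_inc.
Qed.

End Convention.

End Automaton.

Theorem lemma12p3 (Q S : finType) (A : dpta Q S) (p : Q) :
  standing_convention A ->
  ((exists (t : node -> S) (r : node -> Q),
      accepting_run A t r /\ occurs_inf_incomparable r p)
   <-> (productive A p /\ replicated_by_accepting_loop A p)).
Proof.
move=> convention; split.
- move=> [t [r [acc occ]]]; split; last exact: replicated_of_incomparable_occurrences acc occ.
  by have [f [f_p _]] := occ; exists t, r, (f 0); rewrite f_p.
- by move=> [prod_p rep]; apply: accepting_run_of_replication.
Qed.
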